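(* Let $k_0<q$ be positive integers and $\mathbb{F}$ a finite field. Let $\mathcal{S}\subseteq\binom{[q]}{k_0-1}$ be a family of $(k_0-1)$-element subsets of $[q]$ such that any two distinct $S_1,S_2\in\mathcal{S}$ satisfy $|S_1\cap S_2|\le1$. Then there is a black-box transformation with parameters $(k_0-1,\,q+|\mathcal{S}|,\,k_0,\,|\mathcal{S}|,\,\mathbb{F})$ and rate $1-q/(q+|\mathcal{S}|)$, in which $c_j\le|\mathcal{S}|$ for every $j\in[q+|\mathcal{S}|]$.
   Context: A $k$-party $\ell$-LMSSS over $\mathbb{F}$: an $\mathbb{F}$-linear map $\mathsf{Share}:\mathbb{F}^\ell\times\mathbb{F}^e\to\mathbb{F}^{b_1}\times\dots\times\mathbb{F}^{b_k}$ together with an access structure (sets that can linearly recover the secret) and adversary structure (sets whose shares, under uniform randomness, are distributed independently of the secret); information rate $\ell/\sum_jb_j$. Black-box transformation with parameters $(t,k,k_0,\ell,\mathbb{F})$: a $k$-party $\ell$-LMSSS $\mathcal{L}=(\mathsf{Share}_\mathcal{L},\mathsf{Rec}_\mathcal{L})$ over $\mathbb{F}$ with parameters $(e,b_1,\dots,b_k)$ (all $k$ parties together qualified), replication functions $\psi_i:[k_0]\to2^{[k]}$ ($i\in[\ell]$) and conversion functions $\varphi_j:\mathbb{F}^{c_j}\to\mathbb{F}^{b_j}$, $c_j=\sum_{i=1}^\ell|\{v\in[k_0]:j\in\psi_i(v)\}|$, such that for every $(y_i^{(v)})_{i\in[\ell],v\in[k_0]}$ there is $\mathbf{r}$ with $(\varphi_j(\mathbf{Y}(j)))_{j}=\mathsf{Share}_\mathcal{L}((\sum_vy_1^{(v)},\dots,\sum_vy_\ell^{(v)}),\mathbf{r})$,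 where $\mathbf{Y}(j)=(y_i^{(v)})_{i,v:\,j\in\psi_i(v)}$; and for every $T\subseteq[k]$ with $|T|\le t$ and every $i$, $|\bigcup_{j\in T}\{v:j\in\psi_i(v)\}|\le k_0-1$. Its rate is the information rate of $\mathcal{L}$. *)

From HB Require Import structures.
From mathcomp Require Import all_boot all_order all_algebra.
Set Implicit Arguments. Unset Strict Implicit. Unset Printing Implicit Defensive.
Import GRing.Theory Num.Theory.
Local Open Scope ring_scope.

(* A k-party l-LMSSS over F: an F-linear map
   Share : F^l x F^e -> F^(b_1) x ... x F^(b_k). *)
Record LMSSS (F : fieldType) (k l : nat) := MkLMSSS {
  lm_e : nat;
  lm_b : 'I_k -> nat;
  lm_A : forall j : 'I_k, 'M[F]_(l, lm_b j);
  lm_B : forall j : 'I_k, 'M[F]_(lm_e, lm_b j)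
}.

Definition share {F : fieldType} {k l} (L : LMSSS F k l) (j : 'I_k)
  (s : 'rV[F]_l) (r : 'rV[F]_(lm_e L)) : 'rV[F]_(lm_b L j) :=
  s *m lm_A L j + r *m lm_B L j.
Arguments share {F k l} L j s r.

Definition qualified (F : fieldType) k l (L : LMSSS F k l) (T : {set 'I_k}) :=
  exists R : forall j : 'I_k, 'M[F]_(lm_b L j, l),
    forall s r, \sum_(j in T) share L j s r *m R j = s.

Definition info_rate {F : fieldType} {k l} (L : LMSSS F k l) : rat :=
  (l%:R / (\sum_(j < k) lm_b L j)%:R)%R.

Definition Yidx k k0 l (psi : 'I_l -> 'I_k0 -> {set 'I_k}) (j : 'I_k)
  : {set 'I_l * 'I_k0} := [set iv | j \in psi iv.1 iv.2].

Definition cdim k k0 l (psi : 'I_l -> 'I_k0 -> {set 'I_k}) (j : 'I_k) : nat :=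
  #|Yidx psi j|.

Definition Yvec {F : fieldType} k k0 l (psi : 'I_l -> 'I_k0 -> {set 'I_k})
  (y : 'I_l -> 'I_k0 -> F) (j : 'I_k) : 'rV[F]_(cdim psi j) :=
  \row_(m < #|Yidx psi j|) (let iv := enum_val m in y iv.1 iv.2).
Arguments Yvec {F k k0 l} psi y j.

Unset Implicit Arguments.
Record BBT (F : fieldType) (t k k0 l : nat) := MkBBT {
  bb_L : LMSSS F k l;
  bb_psi : 'I_l -> 'I_k0 -> {set 'I_k};
  bb_phi : forall j : 'I_k, 'rV[F]_(cdim bb_psi j) -> 'rV[F]_(lm_b bb_L j);
  bb_full : qualified bb_L [set: 'I_k];
  bb_correct : forall y : 'I_l -> 'I_k0 -> F,
    exists r : 'rV[F]_(lm_e bb_L), forall j : 'I_k,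
      bb_phi j (Yvec bb_psi y j) = share bb_L j (\row_i \sum_(v < k0) y i v) r;
  bb_private : forall (T : {set 'I_k}), (#|T| <= t)%N ->
    forall i : 'I_l, (#|\bigcup_(j in T) [set v | j \in bb_psi i v]| <= k0.-1)%N
}.

Set Implicit Arguments.
Arguments bb_L {F t k k0 l}.
Arguments bb_psi {F t k k0 l}.
Definition bbt_rate F t k k0 l (B : BBT F t k k0 l) : rat := info_rate (bb_L B).
Definition bbt_c F t k k0 l (B : BBT F t k k0 l) (j : 'I_k) : nat := cdim (bb_psi B) j.

(* Take q point parties and one block party per set A_i of S.  With fresh
   randomness r in F^q, point party x holds r_x and block party i holds
   s_i - sum_(x in A_i) r_x; together they recover s.  Of the k0 replicas
   y_i^(v) of s_i, the v-th one (v < k0 - 1) goes to the v-th point a of A_i and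
   to every other block party whose set contains a; the last one goes to block
   party i.  Point party x adds up what it receives, which defines r_x, and
   block party i subtracts from y_i^(k0-1) what it receives from other blocks,
   which is exactly sum_(x in A_i) r_x minus the replicas of s_i it lacks.
   Since two sets of S share at most one point, no party receives two replicas
   of the same s_i: k0 - 1 parties see at most k0 - 1 of the k0 replicas, and
   every party receives at most |S| values. *)

From mathcomp Require Import all_boot all_order all_algebra.
From mathcomp Require Import zify ring.
Import GRing.Theory Num.Theory.

Local Open Scope ring_scope.

Lemma leq_card_bigcup {T I : finType} (P : {pred I}) (X : I -> {set T}) :
  (#|\bigcup_(j in P) X j| <= \sum_(j in P) #|X j|)%N.
Proof.
apply: (big_ind2 (fun (A : {set T}) n => #|A| <= n)%N) => [|A1 n1 A2 n2 h1 h2|//].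
  by rewrite cards0.
exact: leq_trans (leq_card_setU A1 A2) (leq_add h1 h2).
Qed.

Lemma sum_eq_Some {F : pzSemiRingType} {I : finType} (o : option I) (f : I -> F) :
  \sum_x (o == Some x)%:R * f x = oapp f 0 o.
Proof.
case: o => [a|] /=; last by rewrite big1 // => x _; rewrite mul0r.
rewrite (bigD1 a) //= eqxx mul1r big1 ?addr0 // => x ne_xa.
by rewrite (inj_eq Some_inj) eq_sym (negbTE ne_xa) mul0r.
Qed.

Lemma split_lshift {m n} (x : 'I_m) : split (lshift n x) = inl x.
Proof. exact: (unsplitK (inl x)). Qed.

Lemma split_rshift {m n} (x : 'I_n) : split (rshift m x) = inr x.
Proof. exact: (unsplitK (inr x)). Qed.

Section Replication.
Variables (k k0 l : nat) (psi : 'I_l -> 'I_k0 -> {set 'I_k}).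

Section SingleReplicas.
Hypothesis single_replica : forall i j, (#|[set v | j \in psi i v]| <= 1)%N.

Lemma cdim_le_single j : (cdim psi j <= l)%N.
Proof.
rewrite /cdim -(card_in_imset (f := fst)) => [|[i v] [i' v']]; last first.
  rewrite !inE /= => hv hv' ei; subst i'; congr (_, _).
  by move/card_le1_eqP: (single_replica i j); apply; rewrite inE.
by have := max_card [set x.1 | x in Yidx psi j]; rewrite card_ord.
Qed.

Lemma single_replica_private {t} (T : {set 'I_k}) : (#|T| <= t)%N ->
  forall i, (#|\bigcup_(j in T) [set v | j \in psi i v]| <= t)%N.
Proof.
move=> le_T i; apply: leq_trans (leq_card_bigcup _ _) (leq_trans _ le_T).
by rewrite -sum1_card leq_sum.
Qed.

End SingleReplicas.

Variable F : fieldType.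

Definition lin_conv (c : 'I_k -> 'I_l * 'I_k0 -> F) (j : 'I_k)
    (Y : 'rV[F]_(cdim psi j)) : 'rV[F]_1 :=
  \row_(_ < 1) \sum_(m < #|Yidx psi j|) c j (enum_val m) * Y 0 m.

Lemma lin_conv_Yvec c (y : 'I_l -> 'I_k0 -> F) j :
  lin_conv c j (Yvec psi y j) 0 0 = \sum_(iv in Yidx psi j) c j iv * y iv.1 iv.2.
Proof.
rewrite mxE (big_enum_val (fun iv => c j iv * y iv.1 iv.2)).
by apply: eq_bigr => m _; rewrite mxE.
Qed.

End Replication.

Arguments cdim_le_single {k k0 l psi} single_replica j.
Arguments single_replica_private {k k0 l psi} single_replica {t} T.
Arguments lin_conv {k k0 l} psi {F} c j Y.
Arguments lin_conv_Yvec {k k0 l psi F} c y j.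

Section MatrixScheme.
Variables (F : fieldType) (k l e : nat) (A : 'M[F]_(l, k)) (B : 'M[F]_(e, k)).

Definition mx_lmsss : LMSSS F k l :=
  @MkLMSSS F k l e (fun _ => 1%N) (fun j => col j A) (fun j => col j B).

Lemma share_mx_lmsss j s r : share mx_lmsss j s r = col j (s *m A + r *m B).
Proof. by rewrite /share /= !colE mulmxDl !mulmxA. Qed.

Lemma mx_lmsss_full (R : 'M[F]_(k, l)) :
  A *m R = 1%:M -> B *m R = 0 -> qualified mx_lmsss [set: 'I_k].
Proof.
move=> AR1 BR0; exists (fun j => row j R) => s r.
transitivity ((s *m A + r *m B) *m R); last first.
  by rewrite mulmxDl -!mulmxA AR1 BR0 mulmx1 mulmx0 addr0.
rewrite mulmx_sum_row; apply: eq_big => [j|j _]; first by rewrite in_setT.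
by rewrite share_mx_lmsss [col j _]mx11_scalar mul_scalar_mx mxE.
Qed.

Lemma info_rate_mx_lmsss : info_rate mx_lmsss = l%:R / k%:R.
Proof. by rewrite /info_rate sum1_card card_ord. Qed.

End MatrixScheme.

Arguments mx_lmsss {F k l e} A B.
Arguments share_mx_lmsss {F k l e A B} j s r.
Arguments mx_lmsss_full {F k l e A B} R.
Arguments info_rate_mx_lmsss {F k l e} A B.

Section LinearSpaceScheme.
Variables (F : fieldType) (k0 q : nat) (S : {set {set 'I_q}}).

Definition block (i : 'I_#|S|) : {set 'I_q} := enum_val i.

(* The last index v = k0.-1 has no point (None) once #|block i| = k0.-1. *)
Definition point (i : 'I_#|S|) (v : 'I_k0) : option 'I_q := onth (enum (block i)) v.

(* Party [lshift _ x] is the point party of x, [rshift q i] the block party of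
   block i. *)
Definition receives (i : 'I_#|S|) (v : 'I_k0) (j : 'I_(q + #|S|)) : bool :=
  match split j with
  | inl x => point i v == Some x
  | inr i' => if point i v is Some a then (i' != i) && (a \in block i') else i' == i
  end.

Definition receivers i v : {set 'I_(q + #|S|)} := [set j | receives i v j].

Lemma point_in_block {i v a} : point i v = Some a -> a \in block i.
Proof. by move=> ea; rewrite -mem_enum; apply/onthP; exists v. Qed.

Section Hypotheses.
Hypothesis card_S : forall A, A \in S -> #|A| = k0.-1.
Hypothesis meet_S :
  forall S1 S2, S1 \in S -> S2 \in S -> S1 != S2 -> (#|S1 :&: S2| <= 1)%N.

Lemma point_inj {i} : injective (point i).
Proof.
have size_block : size (enum (block i)) = k0.-1.
  by rewrite -cardE card_S // enum_valP.
move=> v v'; rewrite /point; case ev: (onth _ v) => [a|] /esym ev'.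
  have lt_v : (v < k0.-1)%N by rewrite -size_block -onthTE ev.
  have lt_v' : (v' < k0.-1)%N by rewrite -size_block -onthTE ev'.
  apply/val_inj/eqP.
  rewrite -(nth_uniq a (s := enum (block i))) ?enum_uniq ?size_block //.
  by rewrite (onth_nth a _ _ _ ev) (onth_nth a _ _ _ ev').
have ge_v : (k0.-1 <= v)%N by rewrite -size_block -onthNE ev.
have ge_v' : (k0.-1 <= v')%N by rewrite -size_block -onthNE ev'.
apply: val_inj => /=; move: (ltn_ord v) (ltn_ord v') ge_v ge_v'.
by rewrite -!subn1; lia.
Qed.

Lemma block_meet_le1 {i i' a b} : i != i' ->
  a \in block i -> a \in block i' -> b \in block i -> b \in block i' -> a = b.
Proof.
move=> ne_ii' ai ai' bi bi'.
have /card_le1_eqP : (#|block i :&: block i'| <= 1)%N.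
  by apply: meet_S; rewrite ?enum_valP // (inj_eq enum_val_inj).
by apply; rewrite inE ?ai ?bi.
Qed.

Lemma receives_point {i v v' j} :
  receives i v j -> receives i v' j -> point i v = point i v'.
Proof.
rewrite /receives; case: (split j) => [x /eqP -> /eqP -> //|i'].
case ev: (point i v) => [a|]; case ev': (point i v') => [b|] //.
- case/andP=> ne_i'i ai' /andP [_ bi']; congr Some.
  exact: (block_meet_le1 ne_i'i ai' (point_in_block ev) bi' (point_in_block ev')).
- by case/andP=> /negbTE ne ? /eqP ei; rewrite ei eqxx in ne.
- by move=> /eqP ei /andP [/negbTE ne ?]; rewrite ei eqxx in ne.
Qed.

Lemma single_receiver i j : (#|[set v | j \in receivers i v]| <= 1)%N.
Proof.
apply/card_le1_eqP => v v'; rewrite !inE => jv jv'.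
exact: point_inj (receives_point jv' jv).
Qed.

End Hypotheses.

Definition incidence : 'M[F]_(q, #|S|) := \matrix_(x, i) (x \in block i)%:R.

Definition scheme : LMSSS F (q + #|S|) #|S| :=
  mx_lmsss (row_mx 0 1) (row_mx 1 (- incidence)).

Lemma scheme_share j s r :
  share scheme j s r = col j (row_mx r (s - r *m incidence)).
Proof.
by rewrite share_mx_lmsss !mul_mx_row mulmx0 !mulmx1 mulmxN add_row_mx add0r.
Qed.

Lemma scheme_full : qualified scheme [set: 'I_(q + #|S|)].
Proof.
apply: (mx_lmsss_full (col_mx incidence 1)).
  by rewrite mul_row_col mul0mx mul1mx add0r.
by rewrite mul_row_col mul1mx mulNmx mulmx1 subrr.
Qed.

Definition coef (j : 'I_(q + #|S|)) (iv : 'I_#|S| * 'I_k0) : F :=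
  if split j is inr _ then (if point iv.1 iv.2 is Some _ then -1 else 1) else 1.

Definition conversion := lin_conv receivers coef.

Lemma receives_block_coef i (iv : 'I_#|S| * 'I_k0) :
  (receives iv.1 iv.2 (rshift q i))%:R * coef (rshift q i) iv
    + oapp (fun a => (a \in block i)%:R) 0 (point iv.1 iv.2) = (iv.1 == i)%:R.
Proof.
rewrite /receives /coef !split_rshift; case: iv => i' v /=.
case ev: (point i' v) => [a|] /=; last by rewrite mulr1 addr0 eq_sym.
case: (eqVneq i' i) => [ei|ne_i'i] /=.
  by rewrite -ei (point_in_block ev) mul0r add0r.
by rewrite mulrN1 addNr.
Qed.

Definition point_sums (y : 'I_#|S| -> 'I_k0 -> F) : 'rV[F]_q :=
  \row_x \sum_iv (point iv.1 iv.2 == Some x)%:R * y iv.1 iv.2.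

Lemma point_sums_incidence y i :
  (point_sums y *m incidence) 0 i =
  \sum_iv oapp (fun a => (a \in block i)%:R) 0 (point iv.1 iv.2) * y iv.1 iv.2.
Proof.
rewrite mxE; under eq_bigr => x _ do rewrite !mxE big_distrl.
rewrite exchange_big; apply: eq_bigr => iv _ /=.
under eq_bigr => x _ do rewrite mulrAC.
by rewrite -big_distrl sum_eq_Some.
Qed.

Lemma sum_pair_fst (y : 'I_#|S| -> 'I_k0 -> F) i :
  \sum_(v < k0) y i v = \sum_iv (iv.1 == i)%:R * y iv.1 iv.2.
Proof.
rewrite -(big_pred1_eq +%R i (fun i' => \sum_(v < k0) y i' v)) pair_big big_mkcond.
by apply: eq_bigr => iv _; rewrite andbT; case: eqP; rewrite ?mul1r ?mul0r.
Qed.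

Lemma scheme_correct y : exists r, forall j,
  conversion j (Yvec receivers y j) = share scheme j (\row_i \sum_(v < k0) y i v) r.
Proof.
exists (point_sums y) => j; apply/rowP => z.
rewrite ord1 lin_conv_Yvec scheme_share mxE -[j]splitK.
case: (split j) => [x|i] /=.
  rewrite row_mxEl mxE big_mkcond; apply: eq_bigr => iv _.
  rewrite !inE /receives /coef split_lshift mul1r.
  by case: eqP; rewrite ?mul1r ?mul0r.
rewrite row_mxEr 3!mxE sum_pair_fst point_sums_incidence -sumrB big_mkcond.
apply: eq_bigr => iv _; rewrite -(receives_block_coef i iv) mulrDl addrK !inE.
by case: receives; rewrite ?mul1r ?mul0r.
Qed.

End LinearSpaceScheme.

Arguments receivers {k0 q} S i v.
Arguments single_receiver {k0 q S} card_S meet_S i j.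

Theorem mainTheorem14 (F : finFieldType) (k0 q : nat)
  (Hk0 : (0 < k0)%N) (Hk0q : (k0 < q)%N)
  (S : {set {set 'I_q}})
  (HS : forall A, A \in S -> #|A| = k0.-1)
  (Hint : forall S1 S2, S1 \in S -> S2 \in S -> S1 != S2 -> (#|S1 :&: S2| <= 1)%N) :
  exists B : BBT F k0.-1 (q + #|S|) k0 #|S|,
    bbt_rate B = (1 - (q%:R / (q + #|S|)%:R))%R /\
    (forall j : 'I_(q + #|S|), (bbt_c B j <= #|S|)%N).
Proof.
have single := single_receiver HS Hint.
exists (@MkBBT F k0.-1 (q + #|S|) k0 #|S| (@scheme F q S) (receivers S)
  (@conversion F k0 q S) (@scheme_full F q S) (@scheme_correct F k0 q S)
  (single_replica_private single)).
split=> [|j]; last exact: cdim_le_single single j.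
have q_gt0 : (0 < q)%N by apply: leq_ltn_trans Hk0q.
have n_neq0 : (q + #|S|)%:R != 0 :> rat by rewrite pnatr_eq0 -lt0n addn_gt0 q_gt0.
rewrite /bbt_rate /= /scheme info_rate_mx_lmsss.
by move: n_neq0; rewrite natrD => n_neq0; field.
Qed.
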